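(* Let $\mathcal{S}=(\mathcal{S}_i)_{i\in\mathbb{N}}$, where $\mathcal{S}_i$ is the class of graphs all of whose connected components have at most $i$ vertices. Then for all integers $t$ and $\Delta$, the class of finite graphs of treewidth at most $t$ and maximum degree at most $\Delta$ is $\mathcal{S}$-layerable.
   Context: Graphs are unweighted with the shortest-path metric $d_G$. A real projection of $G$ is a map $L:V(G)\to\mathbb{R}$ with $|L(x)-L(y)|\le d_G(x,y)$ for all $x,y$. A set $A\subseteq V(G)$ is $(\infty,S)$-bounded with respect to $L$ if $|L(x)-L(y)|\le S$ for all $x,y\in A$. Given a sequence $\mathcal{L}=(\mathcal{L}_i)_{i\in\mathbb{N}}$ of graph classes with $\mathcal{L}_0\subseteq\mathcal{L}_1\subseteq\cdots$, a class $\mathcal{C}$ is $\mathcal{L}$-layerable if there is a function $f:\mathbb{R}^+\to\mathbb{N}$ such that every $G\in\mathcal{C}$ has a real projection $L$ such that for every $S>0$, every $(\infty,S)$-bounded set of $G$ induces a subgraph belonging to $\mathcal{L}_{f(S)}$. Treewidth is the usual graph parameter (minimum width of a tree-decomposition, width being the maximum bag size minus one). *)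

From Stdlib Require Import Reals.
From mathcomp Require Import all_boot.
Set Implicit Arguments. Unset Strict Implicit. Unset Printing Implicit Defensive.

Definition simple_graph (T : finType) (e : rel T) : Prop :=
  symmetric e /\ irreflexive e.

(* d_G(x,y) <= k : there is a walk of length exactly k from x to y.
   (d_G(x,y) is the least such k; infinite if none exists.) *)
Definition walk_of_len (T : finType) (e : rel T) (x y : T) (k : nat) : Prop :=
  exists p : seq T, size p = k /\ path e x p /\ last x p = y.

(* Real projection: |L x - L y| <= d_G(x,y) for all x y.  Since d_G(x,y) is
   the minimum length of a walk from x to y (and +oo if none), this is
   exactly: |L x - L y| <= k for every walk of length k from x to y. *)
Definition real_projection (T : finType) (e : rel T) (L : T -> R) : Prop :=
  forall x y k, walk_of_len e x y k -> Rle (Rabs (Rminus (L x) (L y))) (INR k).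

Definition inf_S_bounded (T : finType) (L : T -> R) (S : R) (A : {set T}) : Prop :=
  forall x y, x \in A -> y \in A -> Rle (Rabs (Rminus (L x) (L y))) S.

Definition induced (T : finType) (e : rel T) (A : {set T}) : rel T :=
  [rel x y | [&& x \in A, y \in A & e x y]].

Definition components_at_most (T : finType) (e : rel T) (A : {set T}) (n : nat) : Prop :=
  forall x, x \in A -> #|[set y in A | connect (induced e A) x y]| <= n.

Definition max_degree_le (T : finType) (e : rel T) (D : nat) : Prop :=
  forall x, #|[set y | e x y]| <= D.

Definition connected_set (I : finType) (r : rel I) (X : {set I}) : Prop :=
  forall i j, i \in X -> j \in X -> connect (induced r X) i j.

Definition acyclic (I : finType) (r : rel I) : Prop :=
  ~ exists (x : I) (p : seq I),
      2 <= size p /\ uniq (x :: p) /\ path r x p /\ r (last x p) x.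

Definition is_tree (I : finType) (r : rel I) : Prop :=
  0 < #|I| /\ simple_graph r /\ connected_set r [set: I] /\ acyclic r.

Definition tree_decomposition_width_le (T : finType) (e : rel T)
    (I : finType) (r : rel I) (B : I -> {set T}) (t : nat) : Prop :=
  [/\ is_tree r,
      forall v : T, exists i, v \in B i,
      forall u v : T, e u v -> exists i, (u \in B i) && (v \in B i),
      forall v : T, connected_set r [set i | v \in B i]
    & forall i, #|B i| <= t.+1].

Definition treewidth_le (T : finType) (e : rel T) (t : nat) : Prop :=
  exists (I : finType) (r : rel I) (B : I -> {set T}),
    tree_decomposition_width_le e r B t.

Definition S_layerable (C : forall T : finType, rel T -> Prop) : Prop :=
  exists f : R -> nat,
    forall (T : finType) (e : rel T), simple_graph e -> C T e ->
      exists L : T -> R, real_projection e L /\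
        forall S : R, Rlt 0 S ->
          forall A : {set T}, inf_S_bounded L S A -> components_at_most e A (f S).

From Stdlib Require Import Reals Lra Lia ZArith.
From mathcomp Require Import all_boot zify.
Set Implicit Arguments. Unset Strict Implicit. Unset Printing Implicit Defensive.

(* Root the tree decomposition.  Repeatedly cutting off the deepest subtree
   holding more than p vertices of S by the bag at its root yields X with
   (p+1)|X| <= (t+1)|S| such that each component of U - X meets S in at most
   p vertices.  Take p = 2Δ(t+1) and build, by recursion on connected pieces U
   with a boundary S of size O(Δ²t), a layering L : V -> nat that is
   1-Lipschitz along edges and 0 on S: cut U along R = S ∪ X ∪ {x0}, put L = 0
   on R, and on each component K of U - R put L = 1 + the layering of K whose
   boundary is the set of neighbours of R in K.  Those neighbours are adjacent
   to X, to x0 or to one of the at most p vertices of S in the component of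
   U - X containing K, so the boundary stays O(Δ²t).  As U is connected, each
   level set {L <= s+1} lies in R together with the level sets {L <= s} of the
   O(Δ²t) components touching R, so every connected set on which L varies by
   at most s has size bounded in terms of s, t and Δ. *)

Lemma card_bigcup_le (I T : finType) (P : pred I) (F : I -> {set T}) :
  #|\bigcup_(i | P i) F i| <= \sum_(i | P i) #|F i|.
Proof.
elim/big_rec2: _ => [|i U n _ IH]; first by rewrite cards0.
exact: leq_trans (leq_card_setU _ _).1 (leq_add (leqnn _) IH).
Qed.

Section Components.
Variables (T : finType) (e : rel T).
Hypothesis esym : symmetric e.
Implicit Types (A C R W : {set T}) (x y : T).

Definition component A x := [set y in A | connect (induced e A) x y].

Definition neighbours R := [set y | [exists x in R, e x y]].

Lemma induced_sym A : symmetric (induced e A).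
Proof. by move=> x y; rewrite /induced /= esym; do 2 case: (_ \in A). Qed.

Lemma connect_induced_mem A x y :
  x \in A -> connect (induced e A) x y -> y \in A.
Proof.
move=> xA /connectP[p]; elim: p x xA => [|z p IH] x xA /=; first by move=> _ ->.
by case/andP=> /and3P[_ zA _]; apply: IH.
Qed.

Lemma connect_induced_sub A W x y :
  A \subset W -> connect (induced e A) x y -> connect (induced e W) x y.
Proof.
move=> /subsetP AW; apply: connect_sub => u v /and3P[uA vA euv].
by apply: connect1; rewrite /induced /= !AW.
Qed.

Lemma connect_induced_closed A (P : pred T) x y :
  {in A &, forall u v, e u v -> P u -> P v} -> P x -> x \in A ->
  connect (induced e A) x y -> P y /\ connect (induced e [set z in A | P z]) x y.
Proof.
move=> Pe Px xA /connectP[p]; elim: p x Px xA => [|z p IH] x Px xA /=.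
  by move=> _ ->.
case/andP=> /and3P[_ zA exz] pz yl; have Pz : P z by apply: (Pe x).
have [Py Czy] := IH z Pz zA pz yl; split=> //.
by apply: connect_trans Czy; apply: connect1; rewrite /induced /= !inE xA zA Px Pz.
Qed.

Lemma component_self A x : x \in A -> x \in component A x.
Proof. by move=> xA; rewrite inE xA connect0. Qed.

Lemma component_sub A x : component A x \subset A.
Proof. by apply/subsetP => y; rewrite inE => /andP[]. Qed.

Lemma component_subset A W x : A \subset W -> component A x \subset component W x.
Proof.
move=> AW; apply/subsetP => y; rewrite !inE => /andP[yA xy].
by rewrite (subsetP AW) //= (connect_induced_sub AW xy).
Qed.

Lemma component_edge A x u v :
  u \in component A x -> v \in A -> e u v -> v \in component A x.
Proof.
rewrite !inE => /andP[uA xu] vA euv; rewrite vA.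
by apply: connect_trans xu (connect1 _); rewrite /induced /= uA vA.
Qed.

Lemma component_eq A x y : y \in component A x -> component A y = component A x.
Proof.
rewrite inE => /andP[yA xy]; have xA : x \in A.
  by apply: connect_induced_mem yA _; rewrite (sym_connect_sym (induced_sym A)).
have yx : connect (induced e A) y x by rewrite (sym_connect_sym (induced_sym A)).
apply/setP => z; rewrite !inE; case: (z \in A) => //=.
by apply/idP/idP; apply: connect_trans.
Qed.

Lemma connected_sub_component C W x :
  connected_set e C -> C \subset W -> x \in C -> C \subset component W x.
Proof.
move=> Cconn CW xC; apply/subsetP => y yC.
by rewrite inE (subsetP CW) //= (connect_induced_sub CW (Cconn x y xC yC)).
Qed.

Lemma component_connected A x : x \in A -> connected_set e (component A x).
Proof.
move=> xA.
have from_x y : y \in component A x -> connect (induced e (component A x)) x y.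
  rewrite inE => /andP[_ xy].
  have [_ Cxy] := connect_induced_closed (fun u v _ vA euv xu => component_edge xu vA euv)
    (component_self xA) xA xy.
  by apply: connect_induced_sub Cxy; apply/subsetP => z; rewrite inE => /andP[].
move=> y z /from_x xy /from_x xz.
by apply: connect_trans xz; rewrite (sym_connect_sym (induced_sym _)).
Qed.

Lemma component_meets_neighbours A R x y :
  x \in A :\: R -> connect (induced e A) x y -> y \in R ->
  exists2 z, z \in component (A :\: R) x & z \in neighbours R.
Proof.
move=> xAR /connectP[p]; elim: p x xAR => [|w p IH] x xAR /=.
  by move=> _ -> yR; move: xAR; rewrite inE yR.
case/andP=> /and3P[xA wA exw] pw yl yR; case wR: (w \in R).
  exists x; first exact: component_self.
  by rewrite inE; apply/exists_inP; exists w; rewrite // esym.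
have wAR : w \in A :\: R by rewrite inE wR wA.
have [z zw zN] := IH w wAR pw yl yR; exists z => //.
rewrite -(@component_eq _ x w) // inE wAR; apply: connect1.
by rewrite /induced /= xAR wAR.
Qed.

Lemma card_neighbours d R :
  max_degree_le e d -> #|neighbours R| <= #|R| * d.
Proof.
move=> deg; have sub : neighbours R \subset \bigcup_(x in R) [set y | e x y].
  apply/subsetP => y; rewrite inE => /exists_inP[x xR exy].
  by apply/bigcupP; exists x; rewrite ?inE.
apply: leq_trans (subset_leq_card sub) (leq_trans (card_bigcup_le _ _) _).
by rewrite -sum_nat_const; apply: leq_sum => x _; apply: deg.
Qed.

Lemma component_choice W (P : {set T} -> (T -> nat) -> Prop) :
  {in W, forall y, exists L, P (component W y) L} ->
  exists Lc : {set T} -> T -> nat, {in W, forall y, P (component W y) (Lc (component W y))}.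
Proof.
move=> exP.
have exC (C : {set T}) :
    exists L : T -> nat, {in W, forall y, C = component W y -> P C L}.
  case: (pickP [pred y | (y \in W) && (C == component W y)]) => [y /andP[yW /eqP->]|none].
    by have [L HL] := exP y yW; exists L.
  by exists (fun _ => 0) => y yW CK; move: (none y); rewrite /= yW CK eqxx.
have [Lc HLc] := fin_all_exists exC.
by exists Lc => y yW; apply: (HLc _ y yW).
Qed.

End Components.

Section RootedTree.
Variables (I : finType) (r : rel I) (rho : I).
Hypotheses (rsym : symmetric r) (rirr : irreflexive r) (racyc : acyclic r).
Hypothesis rconn : forall i, connect r rho i.

Definition without_edge (i j : I) : rel I :=
  [rel x y | r x y && ~~ (((x == i) && (y == j)) || ((x == j) && (y == i)))].

Lemma without_edge_sym i j : symmetric (without_edge i j).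
Proof.
move=> x y; rewrite /without_edge /= rsym.
by case: (x == i); case: (y == j); case: (x == j); case: (y == i).
Qed.

Lemma acyclic_bridge i j : r i j -> ~ connect (without_edge i j) i j.
Proof.
move=> rij /connectP[p pp pl]; move: pl; case: (shortenP pp) => q qp qu _ ql.
apply: racyc; exists i, q; split=> //; last split=> //.
- case: q qp qu ql => [|a [|b q]] //=; first by move=> _ _ ij; rewrite ij rirr in rij.
  by move=> /andP[ria _] _ aj; move: ria; rewrite -aj /without_edge /= !eqxx andbF.
- split; first by apply: sub_path qp => x y /andP[].
  by rewrite -ql rsym.
Qed.

Definition root_walk (i : I) (n : nat) : bool :=
  [exists p : n.-tuple I, path r rho p && (last rho p == i)].

Lemma root_walkP i n :
  reflect (exists p : seq I, [/\ size p = n, path r rho p & last rho p = i])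
    (root_walk i n).
Proof.
apply: (iffP existsP) => [[p /andP[pp /eqP pl]]|[p [sp pp pl]]].
  by exists p; rewrite size_tuple.
have sp' : size p == n by rewrite sp.
by exists (Tuple sp'); rewrite /= pp pl eqxx.
Qed.

Lemma exists_root_walk i : exists n, root_walk i n.
Proof.
have /connectP[p pp pl] := rconn i.
by exists (size p); apply/root_walkP; exists p.
Qed.

Definition depth i := ex_minn (exists_root_walk i).

Lemma root_walk_depth i : root_walk i (depth i).
Proof. by rewrite /depth; case: ex_minnP. Qed.

Lemma depth_min i n : root_walk i n -> depth i <= n.
Proof. by rewrite /depth; case: ex_minnP => m _ min /min. Qed.

Lemma depth_root : depth rho = 0.
Proof. by apply/eqP; rewrite -leqn0; apply: depth_min; apply/root_walkP; exists [::]. Qed.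

Lemma depth_eq0 i : depth i = 0 -> i = rho.
Proof.
move=> d0; have /root_walkP[p [sp _ pl]] := root_walk_depth i.
by move: sp; rewrite d0 => /size0nil p0; rewrite -pl p0.
Qed.

Lemma depth_edge i j : r i j -> depth j <= (depth i).+1.
Proof.
move=> rij; have /root_walkP[p [sp pp pl]] := root_walk_depth i.
apply: depth_min; apply/root_walkP; exists (rcons p j).
by rewrite size_rcons rcons_path last_rcons sp pp pl rij.
Qed.

Lemma exists_parent i :
  0 < depth i -> exists j, r i j && ((depth j).+1 == depth i).
Proof.
move=> dpos; have /root_walkP[p [sp pp pl]] := root_walk_depth i.
case/lastP: p sp pp pl => [|p z]; first by move=> sp; rewrite -sp in dpos.
rewrite size_rcons rcons_path last_rcons => sp /andP[pp rz] zi.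
exists (last rho p); rewrite rsym -zi rz /=.
have : depth (last rho p) <= size p by apply: depth_min; apply/root_walkP; exists p.
by have := depth_edge rz; rewrite zi -sp => *; apply/eqP; lia.
Qed.

Definition parent i := odflt i [pick j | r i j && ((depth j).+1 == depth i)].

Lemma parentP i : 0 < depth i -> r i (parent i) /\ (depth (parent i)).+1 = depth i.
Proof.
move=> /exists_parent ex; rewrite /parent; case: pickP => [j /andP[rij /eqP ->] //|none].
by case: ex => j; rewrite none.
Qed.

Lemma parent_root : parent rho = rho.
Proof. by rewrite /parent; case: pickP => [j /andP[_ /eqP]|//]; rewrite depth_root. Qed.

Lemma depth_parent i : depth (parent i) = (depth i).-1.
Proof.
case: (posnP (depth i)) => [d0|dpos]; last by have [_ <-] := parentP dpos.
by rewrite (depth_eq0 d0) parent_root depth_root.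
Qed.

Lemma connect_root_by_parents (r' : rel I) :
  (forall a, 0 < depth a -> r' a (parent a)) -> forall a, connect r' a rho.
Proof.
move=> r'par a; elim: {a}(depth a).+1 {-2}a (ltnSn (depth a)) => // n IH a.
case: (posnP (depth a)) => [/depth_eq0 -> _|dpos da]; first exact: connect0.
apply: connect_trans (connect1 (r'par a dpos)) (IH _ _).
by rewrite depth_parent; lia.
Qed.

Lemma edge_parent i j : r i j -> parent i = j \/ parent j = i.
Proof.
move=> rij; case: (parent i =P j) => [|pij]; first by left.
case: (parent j =P i) => [|pji]; first by right.
(* Both ends then reach the root by parent edges other than [i -- j]. *)
have up : forall a, connect (without_edge i j) a rho.
  apply: connect_root_by_parents => a /parentP[rap _].
  rewrite /without_edge /= rap /=.
  by apply/negP => /orP[] /andP[/eqP-> /eqP].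
case: (acyclic_bridge rij); apply: connect_trans (up i) _.
by rewrite (sym_connect_sym (without_edge_sym i j)).
Qed.

Definition ancestor (d : nat) (i : I) := iter (depth i - d) parent i.

Lemma depth_iter_parent n i : depth (iter n parent i) = depth i - n.
Proof. by elim: n => [|n IH] /=; rewrite ?subn0 // depth_parent IH subnS. Qed.

Lemma depth_ancestor d i : d <= depth i -> depth (ancestor d i) = d.
Proof. by move=> di; rewrite /ancestor depth_iter_parent subKn. Qed.

Lemma ancestor_depth i : ancestor (depth i) i = i.
Proof. by rewrite /ancestor subnn. Qed.

Lemma ancestorK a b i : a <= b -> b <= depth i -> ancestor a (ancestor b i) = ancestor a i.
Proof.
move=> ab bi; rewrite /ancestor depth_iter_parent subKn // -iterD; congr iter; lia.
Qed.

Lemma ancestor_parent a i : a < depth i -> ancestor a (parent i) = ancestor a i.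
Proof.
move=> ai; rewrite /ancestor depth_parent.
have -> : depth i - a = ((depth i).-1 - a).+1 by lia.
by rewrite iterSr.
Qed.

Lemma ancestor_edge a i j : r i j -> a <= depth i -> a <= depth j ->
  ancestor a i = ancestor a j.
Proof.
have child k l : r k l -> parent k = l -> a <= depth l -> ancestor a k = ancestor a l.
  move=> rkl pkl al; have kpos : 0 < depth k.
    by case: (posnP (depth k)) => // /depth_eq0 k0; rewrite k0 -pkl k0 parent_root rirr in rkl.
  by rewrite -pkl ancestor_parent //; have [_ <-] := parentP kpos; rewrite pkl.
move=> rij ai aj; case: (edge_parent rij) => [pij|pji]; first exact: child rij pij aj.
by symmetry; apply: child pji ai; rewrite rsym.
Qed.

Lemma ancestor_walk (Z : {set I}) a i j : {in Z, forall k, a <= depth k} -> i \in Z ->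
  connect (induced r Z) i j -> ancestor a i = ancestor a j.
Proof.
move=> Za iZ /connectP[p]; elim: p i iZ => [|k p IH] i iZ /=; first by move=> _ ->.
case/andP => /and3P[_ kZ rik] pk pl.
by rewrite (ancestor_edge rik (Za _ iZ) (Za _ kZ)); apply: IH.
Qed.

Lemma ancestor_on_walk (Z : {set I}) a i j : i \in Z -> connect (induced r Z) i j ->
  depth j < a -> a <= depth i -> ancestor a i \in Z.
Proof.
move=> iZ /connectP[p]; elim: p i iZ => [|k p IH] i iZ /=.
  by move=> _ -> ja aj; move: (leq_trans ja aj); rewrite ltnn.
case/andP => /and3P[_ kZ rik] pk pl ja ai.
case: (leqP a (depth k)) => ak; first by rewrite (ancestor_edge rik ai ak); apply: IH.
have -> : a = depth i by rewrite rsym in rik; have := depth_edge rik; lia.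
by rewrite ancestor_depth.
Qed.

Definition in_subtree i j := (depth i <= depth j) && (ancestor (depth i) j == i).

Lemma in_subtree_trans i j k : in_subtree i j -> in_subtree j k -> in_subtree i k.
Proof.
case/andP=> ij /eqP ji /andP[jk /eqP kj]; rewrite /in_subtree (leq_trans ij jk) /=.
by apply/eqP; rewrite -{2}ji -kj ancestorK.
Qed.

Lemma in_subtree_root i : in_subtree rho i.
Proof.
rewrite /in_subtree depth_root /=; apply/eqP/depth_eq0.
by rewrite depth_ancestor.
Qed.

Lemma in_subtree_total i j k : in_subtree i k -> in_subtree j k ->
  depth i <= depth j -> in_subtree i j.
Proof.
move=> /andP[ik /eqP ki] /andP[jk /eqP kj] ij; rewrite /in_subtree ij /=.
by apply/eqP; rewrite -kj ancestorK // ki.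
Qed.

Lemma in_subtree_ancestor d j : d <= depth j -> in_subtree (ancestor d j) j.
Proof. by move=> dj; rewrite /in_subtree !depth_ancestor // dj eqxx. Qed.

End RootedTree.

Section TreeDecomposition.
Variables (T : finType) (e : rel T) (I : finType) (r : rel I) (B : I -> {set T}).
Variables (t : nat) (rho : I).
Hypothesis esym : symmetric e.
Hypothesis td : tree_decomposition_width_le e r B t.

Lemma td_tree_sym : symmetric r. Proof. by case: td => -[_ [[]]]. Qed.
Lemma td_tree_irr : irreflexive r. Proof. by case: td => -[_ [[]]]. Qed.
Lemma td_tree_acyclic : acyclic r. Proof. by case: td => -[_ [_ []]]. Qed.

Lemma td_tree_connect i : connect r rho i.
Proof.
case: td => -[_ [_ [rconn _]]] _ _ _ _.
apply: connect_sub (rconn rho i (in_setT _) (in_setT _)) => j k /and3P[_ _ rjk].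
exact: connect1.
Qed.

Lemma td_cover v : exists i, v \in B i. Proof. by case: td. Qed.
Lemma td_edge u v : e u v -> exists i, (u \in B i) && (v \in B i).
Proof. by case: td => _ _ cover _ _; apply: cover. Qed.
Lemma td_bags_connected v : connected_set r [set i | v \in B i]. Proof. by case: td. Qed.
Lemma td_width i : #|B i| <= t.+1. Proof. by case: td. Qed.

Local Notation depth := (depth td_tree_connect).
Local Notation ancestor := (ancestor td_tree_connect).
Local Notation in_subtree := (in_subtree td_tree_connect).

Definition top_bag v := [arg min_(i < xchoose (td_cover v) | v \in B i) depth i].

Lemma top_bagP v : v \in B (top_bag v) /\ forall j, v \in B j -> depth (top_bag v) <= depth j.
Proof. by rewrite /top_bag; case: (arg_minnP depth (xchooseP (td_cover v))). Qed.

Lemma mem_top_bag v : v \in B (top_bag v). Proof. by case: (top_bagP v). Qed.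

Lemma top_bag_in_subtree v j : v \in B j -> in_subtree (top_bag v) j.
Proof.
move=> vj; have [vt tmin] := top_bagP v; rewrite /in_subtree tmin //=.
have jN : j \in [set k | v \in B k] by rewrite inE.
have tN : top_bag v \in [set k | v \in B k] by rewrite inE.
rewrite (ancestor_walk td_tree_sym td_tree_irr td_tree_acyclic _ jN (td_bags_connected jN tN)).
  by rewrite ancestor_depth.
by move=> k; rewrite inE => /tmin.
Qed.

Lemma mem_bag_between v j m : v \in B j -> in_subtree m j ->
  depth (top_bag v) <= depth m -> v \in B m.
Proof.
move=> vj /andP[mj /eqP jm] tm; have /andP[_ /eqP jt] := top_bag_in_subtree vj.
case: (ltngtP (depth (top_bag v)) (depth m)) tm => // [lt _|eq _].
  have jN : j \in [set k | v \in B k] by rewrite inE.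
  have tN : top_bag v \in [set k | v \in B k] by rewrite inE mem_top_bag.
  have := ancestor_on_walk td_tree_sym td_tree_irr td_tree_acyclic jN
    (td_bags_connected jN tN) lt mj.
  by rewrite jm inE.
by rewrite -jm -eq jt mem_top_bag.
Qed.

Lemma not_mem_bag_deeper i v : v \notin B i -> in_subtree i (top_bag v) ->
  depth i < depth (top_bag v).
Proof.
move=> viB /andP[iv /eqP vi]; rewrite ltn_neqAle iv andbT.
by apply: contra viB => /eqP eqd; rewrite -vi eqd ancestor_depth mem_top_bag.
Qed.

Lemma edge_in_subtree c z w : e z w -> in_subtree c (top_bag z) ->
  depth c <= depth (top_bag w) -> in_subtree c (top_bag w).
Proof.
move=> ezw cz cw; have [j /andP[zj wj]] := td_edge ezw.
have cj := in_subtree_trans td_tree_sym cz (top_bag_in_subtree zj).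
by apply: (in_subtree_total td_tree_sym cj (top_bag_in_subtree wj)).
Qed.

Lemma edge_leaving_subtree i z w : e z w -> in_subtree i (top_bag z) ->
  ~~ in_subtree i (top_bag w) -> w \in B i.
Proof.
move=> ezw iz iw; have [j /andP[zj wj]] := td_edge ezw.
case: (leqP (depth i) (depth (top_bag w))) => [le|lt].
  by rewrite (edge_in_subtree ezw iz le) in iw.
apply: mem_bag_between wj _ (ltnW lt).
exact: (in_subtree_trans td_tree_sym iz (top_bag_in_subtree zj)).
Qed.

Definition below (U : {set T}) i := [set v in U | in_subtree i (top_bag v)].

Lemma below_root U : below U rho = U.
Proof. by apply/setP=> v; rewrite inE (in_subtree_root td_tree_sym) andbT. Qed.

Section AvoidingBag.
Variables (W : {set T}) (i : I).
Hypothesis W_avoids : {in W, forall w, w \notin B i}.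

Lemma component_in_child_subtree (U : {set T}) x : W \subset U -> x \in W ->
  in_subtree i (top_bag x) ->
  let c := ancestor (depth i).+1 (top_bag x) in
  depth c = (depth i).+1 /\ component e W x \subset below U c.
Proof.
move=> WU xW ix c; have ix' := not_mem_bag_deeper (W_avoids xW) ix.
have dc : depth c = (depth i).+1 by rewrite (depth_ancestor td_tree_sym).
have cx : in_subtree c (top_bag x) by apply: (in_subtree_ancestor td_tree_sym).
have ic : in_subtree i c by apply: (in_subtree_total td_tree_sym ix cx); rewrite dc.
split=> //; apply/subsetP => y; rewrite inE => /andP[yW xy].
rewrite inE (subsetP WU) //=.
have closed : {in W &, forall u v, e u v ->
    in_subtree c (top_bag u) -> in_subtree c (top_bag v)}.
  move=> u v _ vW euv cu; have iu := in_subtree_trans td_tree_sym ic cu.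
  have iv : in_subtree i (top_bag v).
    by apply: contraT => iv; have := W_avoids vW; rewrite (edge_leaving_subtree euv iu iv).
  by apply: (edge_in_subtree euv cu); rewrite dc; apply: not_mem_bag_deeper (W_avoids vW) iv.
by case: (connect_induced_closed closed cx xW xy).
Qed.

Lemma component_outside_subtree x : x \in W -> ~~ in_subtree i (top_bag x) ->
  component e W x \subset component e [set z in W | ~~ in_subtree i (top_bag z)] x.
Proof.
move=> xW ix; apply/subsetP => y; rewrite inE => /andP[yW xy].
have closed : {in W &, forall u v, e u v ->
    ~~ in_subtree i (top_bag u) -> ~~ in_subtree i (top_bag v)}.
  move=> u v uW _ euv iu; apply: contraNN (W_avoids uW) => iv.
  by apply: edge_leaving_subtree iv iu; rewrite esym.
have [iy C] := connect_induced_closed closed ix xW xy.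
by rewrite inE C !inE yW iy.
Qed.

End AvoidingBag.

Theorem td_separator p (S U : {set T}) : S \subset U -> exists X : {set T},
  [/\ X \subset U, p.+1 * #|X| <= t.+1 * #|S|
    & {in U :\: X, forall x, #|S :&: component e (U :\: X) x| <= p}].
Proof.
elim: {S}#|S|.+1 {-2}S (ltnSn #|S|) U => // n IH S Sn U SU.
case: (leqP #|S| p) => [Sp|Sp].
  exists set0; split; rewrite ?sub0set ?cards0 ?muln0 // => x _.
  exact: leq_trans (subset_leq_card (subsetIl _ _)) Sp.
pose heavy i := p < #|S :&: below U i|.
have heavy_root : heavy rho by rewrite /heavy below_root (setIidPl SU).
have [i hi imax] := arg_maxnP depth heavy_root.
set D := below U i.
have SD := cardsID D S.
have S'n : #|S :\: D| < n by rewrite /heavy -/D in hi; lia.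
have [X' [X'U X'card X'comp]] := IH (S :\: D) S'n (U :\: D) (setSD D SU).
set X := U :&: B i :|: X'.
have avoid : {in U :\: X, forall w, w \notin B i}.
  by move=> w; rewrite !inE; case: (w \in B i); case: (w \in U); rewrite //= andbF.
exists X; split.
- by rewrite subUset subsetIl (subset_trans X'U (subsetDl _ _)).
- have UBi : #|U :&: B i| <= t.+1 := leq_trans (subset_leq_card (subsetIr _ _)) (td_width i).
  have XX : #|X| <= t.+1 + #|X'| := leq_trans (leq_card_setU _ _).1 (leq_add UBi (leqnn _)).
  have hi' : p.+1 <= #|S :&: D| by [].
  have := leq_mul (leqnn p.+1) XX; have := leq_mul (leqnn t.+1) hi'; nia.
move=> x xUX; case xD: (x \in D).
  have xi : in_subtree i (top_bag x) by move: xD; rewrite inE => /andP[].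
  have [dc sub] := component_in_child_subtree avoid (subsetDl U X) xUX xi.
  apply: leq_trans (subset_leq_card (setIS S sub)) _.
  by rewrite leqNgt; apply/negP => /imax /=; rewrite dc ltnn.
have notD z : ~~ in_subtree i (top_bag z) -> z \notin D.
  by move=> zi; rewrite inE negb_and zi orbT.
have xi : ~~ in_subtree i (top_bag x).
  by apply: contraFN xD => xi; rewrite inE xi andbT (subsetP (subsetDl U X)).
have shrink : [set z in U :\: X | ~~ in_subtree i (top_bag z)] \subset U :\: D :\: X'.
  apply/subsetP => z; rewrite inE => /andP[zUX /notD zD].
  move: zUX; rewrite !in_setD in_setU zD negb_or => /andP[/andP[_ ->] ->] //.
have xU'X' : x \in U :\: D :\: X' by apply: (subsetP shrink); rewrite inE xUX xi.
have sub := subset_trans (component_outside_subtree avoid xUX xi) (component_subset e x shrink).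
apply: leq_trans (X'comp x xU'X'); apply: subset_leq_card; apply/subsetP => y.
rewrite inE => /andP[yS /(subsetP sub) yc]; rewrite inE yc andbT in_setD yS andbT.
by have := subsetP (component_sub e _ x) y yc; rewrite !in_setD => /and3P[].
Qed.

(* The separator hypothesis of [layering_exists] for [m = p = 2 * d * t.+1]. *)
Corollary td_small_separator d (U S : {set T}) : S \subset U ->
  #|S| <= (2 * d * t.+1 + 2 * d * t.+1).+1 * d -> exists X : {set T},
  [/\ X \subset U, #|X| <= 2 * d * t.+1
    & {in U :\: X, forall x, #|S :&: component e (U :\: X) x| <= 2 * d * t.+1}].
Proof.
move=> SU Ssmall; have [X [XU Xcard Xcomp]] := td_separator (2 * d * t.+1) SU.
exists X; split=> //; rewrite leqNgt; apply/negP => big.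
by have := leq_mul (leqnn t.+1) Ssmall; nia.
Qed.

End TreeDecomposition.

Section Layering.
Variables (T : finType) (e : rel T) (d m p : nat).
Hypotheses (esym : symmetric e) (deg : max_degree_le e d).

Local Notation M := ((m + p).+1 * d).
Local Notation W := (M + m).+1.

Hypothesis sep : forall U S : {set T}, S \subset U -> #|S| <= M -> exists X : {set T},
  [/\ X \subset U, #|X| <= m
    & {in U :\: X, forall x, #|S :&: component e (U :\: X) x| <= p}].

(* The layers [<= s.+1] of a glued layering consist of the cut set [R] of size
   [<= W] and, for each of the [<= W * d] neighbours of [R], the layers [<= s]
   of its component. *)
Fixpoint layer_bound (s : nat) : nat :=
  if s is s'.+1 then W + W * d * layer_bound s' else W.

Definition good_layering (U S : {set T}) (L : T -> nat) :=
  [/\ {in S, forall v, L v = 0},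
      {in U &, forall u v, e u v -> L u <= (L v).+1},
      forall s, #|[set v in U | L v <= s]| <= layer_bound s
    & forall (C : {set T}) a s, connected_set e C -> C \subset U ->
        {in C, forall v, a <= L v <= a + s} -> #|C| <= layer_bound s].

Section Glue.
Variables (U R : {set T}) (x0 : T) (Lc : {set T} -> T -> nat).
Hypotheses (Uconn : connected_set e U) (RU : R \subset U) (x0R : x0 \in R).
Hypothesis R_small : #|R| <= W.

Local Notation K v := (component e (U :\: R) v).

Hypothesis Lc_good :
  {in U :\: R, forall v, good_layering (K v) (K v :&: neighbours e R) (Lc (K v))}.

Definition glued v := if v \in R then 0 else (Lc (K v) v).+1.

Lemma glued_in v : v \in R -> glued v = 0.
Proof. by rewrite /glued => ->. Qed.

Lemma glued_out v : v \notin R -> glued v = (Lc (K v) v).+1.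
Proof. by rewrite /glued => /negbTE->. Qed.

Lemma glued_lipschitz : {in U &, forall u v, e u v -> glued u <= (glued v).+1}.
Proof.
move=> u v uU vU euv; case: (boolP (u \in R)) => [/glued_in-> //|uR].
have uUR : u \in U :\: R by rewrite in_setD uR.
have [Lc0 Lc_lip _ _] := Lc_good uUR; have uK := component_self e uUR.
rewrite glued_out //; case: (boolP (v \in R)) => [vR|vR].
  rewrite glued_in // ltnS leqn0 Lc0 // inE uK inE.
  by apply/exists_inP; exists v; rewrite // esym.
have vK : v \in K u by apply: component_edge uK _ euv; rewrite in_setD vR.
by rewrite glued_out // (component_eq esym vK) ltnS; apply: Lc_lip.
Qed.

Lemma glued_layer s : #|[set v in U | glued v <= s]| <= layer_bound s.
Proof.
case: s => [|s] /=.
  apply: leq_trans R_small; apply/subset_leq_card/subsetP => v.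
  by rewrite inE /glued; case: ifP => // _; rewrite ltn0 andbF.
set N := (U :\: R) :&: neighbours e R.
have sub : [set v in U | glued v <= s.+1] \subset
    R :|: \bigcup_(z in N) [set v in K z | Lc (K z) v <= s].
  apply/subsetP => v; rewrite inE => /andP[vU].
  case: (boolP (v \in R)) => [vR _|vR]; first by rewrite inE vR.
  have vUR : v \in U :\: R by rewrite in_setD vR.
  rewrite glued_out // ltnS => Lv; rewrite inE; apply/orP; right.
  have [z zK zN] := component_meets_neighbours esym vUR (Uconn vU (subsetP RU _ x0R)) x0R.
  apply/bigcupP; exists z; first by rewrite /N in_setI zN (subsetP (component_sub e _ v) z zK).
  by rewrite (component_eq esym zK) inE component_self.
apply: leq_trans (subset_leq_card sub) (leq_trans (leq_card_setU _ _).1 _).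
rewrite leq_add // (leq_trans (card_bigcup_le _ _)) //.
apply: leq_trans (_ : \sum_(z in N) layer_bound s <= _).
  apply: leq_sum => z; rewrite inE => /andP[zUR _].
  by have [_ _ Lc_layer _] := Lc_good zUR; apply: Lc_layer.
rewrite sum_nat_const leq_mul2r; apply/orP; right.
apply: leq_trans (subset_leq_card (subsetIr _ _)) _.
by apply: leq_trans (card_neighbours _ deg) _; rewrite leq_mul2r R_small orbT.
Qed.

Lemma glued_connected C a s : connected_set e C -> C \subset U ->
  {in C, forall v, a <= glued v <= a + s} -> #|C| <= layer_bound s.
Proof.
move=> Cconn CU range.
case: (boolP [exists v in C, v \in R]) => [/exists_inP[v vC vR]|CR].
  have a0 : a = 0 by have := range v vC; rewrite glued_in //; lia.
  apply: leq_trans (glued_layer s); apply/subset_leq_card/subsetP => w wC.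
  by rewrite inE (subsetP CU) //=; have := range w wC; rewrite a0.
have CUR : C \subset U :\: R.
  apply/subsetP => w wC; rewrite in_setD (subsetP CU) // andbT.
  by apply: contra CR => wR; apply/exists_inP; exists w.
case: (set_0Vmem C) => [->|[x xC]]; first by rewrite cards0.
have CK := connected_sub_component Cconn CUR xC.
have [_ _ _ Lc_conn] := Lc_good (subsetP CUR x xC).
apply: (Lc_conn C a.-1 s Cconn CK) => w wC.
have wR : w \notin R by have := subsetP CUR w wC; rewrite in_setD => /andP[].
by have := range w wC; rewrite glued_out // (component_eq esym (subsetP CK w wC)); lia.
Qed.

Lemma good_layering_glued (S : {set T}) : S \subset R -> good_layering U S glued.
Proof.
move=> SR; split; [by move=> v /(subsetP SR)/glued_in | exact: glued_lipschitz |
  exact: glued_layer | exact: glued_connected].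
Qed.

End Glue.

Lemma cut_boundary_small (U S X R : {set T}) x0 y :
  #|X| <= m -> {in U :\: X, forall x, #|S :&: component e (U :\: X) x| <= p} ->
  S \subset U -> X \subset R -> R \subset S :|: X :|: [set x0] -> y \in U :\: R ->
  #|component e (U :\: R) y :&: neighbours e R| <= M.
Proof.
move=> Xm Xcomp SU XR RSX yUR; have URX : U :\: R \subset U :\: X by apply: setDS.
pose Sy := S :&: component e (U :\: X) y.
have sub : component e (U :\: R) y :&: neighbours e R \subset
    neighbours e (X :|: [set x0] :|: Sy).
  apply/subsetP => z /setIP[zK]; rewrite inE => /exists_inP[w wR ewz].
  rewrite /neighbours in_set; apply/exists_inP; exists w => //.
  have wSy : w \in S -> w \notin X -> w \in Sy.
    move=> wS wX; have wUX : w \in U :\: X by rewrite in_setD wX (subsetP SU).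
    rewrite inE wS (component_edge (subsetP (component_subset e y URX) z zK) wUX) //.
    by rewrite esym.
  move: (subsetP RSX w wR); rewrite !in_setU in_set1 => /orP[/orP[wS|->]|->]; rewrite ?orbT //.
  by case: (boolP (w \in X)) => // /(wSy wS)->; rewrite orbT.
apply: leq_trans (subset_leq_card sub) (leq_trans (card_neighbours _ deg) _).
rewrite leq_mul2r; apply/orP; right.
have SyP : #|Sy| <= p := Xcomp y (subsetP URX y yUR).
have := (leq_card_setU (X :|: [set x0]) Sy).1; have := (leq_card_setU X [set x0]).1.
by rewrite cards1; lia.
Qed.

Theorem good_layering_exists (U S : {set T}) x0 : x0 \in U -> connected_set e U ->
  S \subset U -> #|S| <= M -> exists L, good_layering U S L.
Proof.
elim: {U}#|U|.+1 {-2}U (ltnSn #|U|) S x0 => // n IH U Un S x0 x0U Uconn SU SM.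
have [X [XU Xm Xcomp]] := sep SU SM.
set R := S :|: X :|: [set x0].
have x0R : x0 \in R by rewrite !inE eqxx orbT.
have XR : X \subset R by apply/subsetP => w wX; rewrite !inE wX orbT.
have SR : S \subset R by apply/subsetP => w wS; rewrite !inE wS.
have RU : R \subset U by rewrite !subUset SU XU sub1set x0U.
have R_small : #|R| <= W.
  apply: leq_trans (leq_card_setU _ _).1 _; rewrite cards1 addn1 ltnS.
  exact: leq_trans (leq_card_setU _ _).1 (leq_add SM Xm).
pose P C L := good_layering C (C :&: neighbours e R) L.
have [Lc Lc_good] : exists Lc, {in U :\: R, forall y,
    P (component e (U :\: R) y) (Lc (component e (U :\: R) y))}.
  apply: component_choice => y yUR; apply: (IH _ _ _ y) => //.
  - suff : #|U :\: R| < #|U| by have := subset_leq_card (component_sub e (U :\: R) y); lia.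
    by apply/proper_card/properP; split; [exact: subsetDl | exists x0; rewrite ?in_setD ?x0R].
  - exact: component_self.
  - exact: component_connected.
  - exact: subsetIl.
  - exact: (cut_boundary_small Xm Xcomp SU XR (subxx _) yUR).
by exists (glued U R Lc); apply: (good_layering_glued Uconn RU x0R R_small Lc_good SR).
Qed.

Theorem layering_exists : exists L : T -> nat,
  (forall u v, e u v -> L u <= (L v).+1) /\
  forall (C : {set T}) a s, connected_set e C ->
    {in C, forall v, a <= L v <= a + s} -> #|C| <= layer_bound s.
Proof.
pose P C L := good_layering C set0 L.
have [Lc Lc_good] : exists Lc, {in [set: T], forall y,
    P (component e [set: T] y) (Lc (component e [set: T] y))}.
  apply: component_choice => y yT.
  apply: (good_layering_exists (component_self e yT) (component_connected esym yT) (sub0set _)).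
  by rewrite cards0.
exists (fun v => Lc (component e [set: T] v) v); split.
  move=> u v euv; have uK := component_self e (in_setT u).
  have vK := component_edge uK (in_setT v) euv.
  have [_ Lc_lip _ _] := Lc_good u (in_setT u).
  by rewrite (component_eq esym vK); apply: Lc_lip.
move=> C a s Cconn range; case: (set_0Vmem C) => [->|[x xC]]; first by rewrite cards0.
have CK := connected_sub_component Cconn (subsetT C) xC.
have [_ _ _ Lc_conn] := Lc_good x (in_setT x); apply: (Lc_conn C a s Cconn CK) => w wC.
by rewrite -(component_eq esym (subsetP CK w wC)); apply: range.
Qed.

End Layering.

Lemma walk_of_len_lipschitz (T : finType) (e : rel T) (L : T -> nat) x y k :
  symmetric e -> (forall u v, e u v -> L u <= (L v).+1) ->
  walk_of_len e x y k -> L x <= L y + k /\ L y <= L x + k.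
Proof.
move=> esym Llip [p [<- [pp <-]]]; elim: p x pp => [|z p IH] x /=; first by rewrite !addn0.
case/andP => exz /IH[IH1 IH2]; have := Llip _ _ exz; rewrite esym in exz.
by have := Llip _ _ exz; lia.
Qed.

Lemma real_projection_INR (T : finType) (e : rel T) (L : T -> nat) :
  symmetric e -> (forall u v, e u v -> L u <= (L v).+1) ->
  real_projection e (fun v => INR (L v)).
Proof.
move=> esym Llip x y k /(walk_of_len_lipschitz esym Llip) [/leP xy /leP yx].
apply: Rabs_le; have := le_INR _ _ xy; have := le_INR _ _ yx; rewrite !plus_INR; lra.
Qed.

Lemma lt_of_Rabs_INR (a b n : nat) (S : R) :
  Rle (Rabs (Rminus (INR a) (INR b))) S -> Rlt S (INR n) -> a < b + n.
Proof.
move=> ab Sn; apply/ltP/INR_lt; rewrite plus_INR.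
by have := Rle_abs (INR a - INR b); lra.
Qed.

Lemma lt_INR_up (S : R) : Rlt 0 S -> Rlt S (INR (Z.to_nat (up S))).
Proof.
move=> S0; have [upS _] := archimed S.
have up0 : (0 <= up S)%Z by apply: le_IZR; lra.
by rewrite INR_IZR_INZ Z2Nat.id.
Qed.

Theorem theorem5p4 (t D : nat) :
  S_layerable (fun (T : finType) (e : rel T) => treewidth_le e t /\ max_degree_le e D).
Proof.
pose q := 2 * D * t.+1.
exists (fun S => layer_bound D q q (2 * Z.to_nat (up S))).
move=> T e [esym _] [[I [r [B td]]] deg].
have [rho _] : exists rho : I, rho \in I by apply/card_gt0P; case: td => -[].
have [L [Llip Lconn]] := layering_exists esym deg (td_small_separator rho esym td (d := D)).
exists (fun v => INR (L v)); split; first exact: real_projection_INR.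
move=> S S0 A Abnd x xA; have Sn := lt_INR_up S0; set n := Z.to_nat (up S) in Sn *.
apply: (Lconn _ (L x - n) (2 * n) (component_connected esym xA)) => y.
rewrite inE => /andP[yA _].
have := lt_of_Rabs_INR (Abnd x y xA yA) Sn; have := lt_of_Rabs_INR (Abnd y x yA xA) Sn.
lia.
Qed.
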